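(* Let $N\ge 1$, let $1\ge x^{(1)}>x^{(2)}>\dots>x^{(N)}\ge 0$ and $y^{(1)},\dots,y^{(N)}\in\mathbb{R}$. For $a>0$ let $TNN_a$ be the triangularly-constructed network described in the context, and let $\delta(a)=1-\sigma(a)$. Then for every $k=1,\dots,N$, $$\big|TNN_a(x^{(k)})-y^{(k)}\big|\le (N+1)\,\delta(a)\,\max_{1\le j\le N}|y^{(j)}|.$$ Consequently, for every $\epsilon>0$ there exists $a>0$ such that $|TNN_a(x^{(k)})-y^{(k)}|\le\epsilon$ for all $k=1,\dots,N$ (in particular the average error $\frac1N\sum_k|TNN_a(x^{(k)})-y^{(k)}|\le\epsilon$).
   Context: Let $\sigma(t)=1/(1+e^{-t})$ be the sigmoid; note $\sigma(-a)=1-\sigma(a)$. Data: $1\ge x^{(1)}>x^{(2)}>\dots>x^{(N)}\ge0$ with labels $y^{(k)}\in\mathbb{R}$. Set $\Delta^{(k)}=x^{(k)}-x^{(k+1)}$ for $k=1,\dots,N-1$, and let $\Delta^{(N)}>0$ be an arbitrary fixed positive number (equivalently $\Delta^{(N)}=x^{(N)}-x^{(N+1)}$ for a dummy point $x^{(N+1)}<x^{(N)}$). Given $a>0$, define $W,b\in\mathbb{R}^N$ by $W_{N-k+1}=2a/\Delta^{(k)}$ and $b_{N-k+1}=a-W_{N-k+1}x^{(k)}$ for $k=1,\dots,N$. Define $\alpha\in\mathbb{R}^N$ by $\alpha_i=y^{(N-i+1)}-y^{(N-i+2)}$ for $i=1,\dots,N$, with the convention $y^{(N+1)}:=0$ (so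 that $y^{(k)}=\sum_{i=1}^{N-k+1}\alpha_i$). The triangularly-constructed neural network is $TNN_a(x)=\sum_{i=1}^N\alpha_i\,\sigma(W_ix+b_i)$ for $x\in\mathbb{R}$. *)

(* concrete reals R. Indices are 1-based as in the paper. *)
From Stdlib Require Import Reals Lra Lia Arith.
Open Scope R_scope.

Definition sigmoid (t : R) : R := / (1 + exp (- t)).

Fixpoint sum1 (f : nat -> R) (n : nat) : R :=
  match n with
  | O => 0
  | S m => sum1 f m + f (S m)
  end.

(* max_{1<=j<=n} |y j|  (0 for n = 0; since |y j| >= 0 this is the max for n >= 1) *)
Fixpoint maxabs (y : nat -> R) (n : nat) : R :=
  match n with
  | O => 0
  | S m => Rmax (maxabs y m) (Rabs (y (S m)))
  end.

(* Delta^(k) = x^(k) - x^(k+1) for k < N, and Delta^(N) = dN (arbitrary positive) *)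
Definition Delta (N : nat) (x : nat -> R) (dN : R) (k : nat) : R :=
  if (k <? N)%nat then x k - x (S k) else dN.

Definition Wt (N : nat) (x : nat -> R) (dN a : R) (i : nat) : R :=
  2 * a / Delta N x dN (N - i + 1).

Definition bt (N : nat) (x : nat -> R) (dN a : R) (i : nat) : R :=
  a - Wt N x dN a i * x (N - i + 1)%nat.

Definition yext (N : nat) (y : nat -> R) (j : nat) : R :=
  if (j <=? N)%nat then y j else 0.

Definition alpha (N : nat) (y : nat -> R) (i : nat) : R :=
  yext N y (N - i + 1) - yext N y (N - i + 2).

Definition TNN (N : nat) (x y : nat -> R) (dN a t : R) : R :=
  sum1 (fun i => alpha N y i * sigmoid (Wt N x dN a i * t + bt N x dN a i)) N.

Definition delta (a : R) : R := 1 - sigmoid a.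

(* Reindexing the hidden units so that unit j switches at x^(j), the output at x^(k) is
   sum_j (y^(j) - y^(j+1)) s_j, while y^(k) is the same telescoping sum with s_j replaced by
   the step [k <= j].  The error weights c_j = s_j - [k <= j] lie in [0, delta] before k and
   in [-delta, 0] from k on.  After summation by parts the error is sum_j y^(j) (c_j - c_(j-1)),
   and every increment of c is at most delta except the single sign change at j = k, which is
   at most 2 delta: this gives the factor N + 1.  Since delta(a) = 1 / (1 + e^a) -> 0, any
   accuracy is reached for a large. *)

From Pilot Require Import Defs.
From Stdlib Require Import Reals Lra Lia Arith.
Open Scope R_scope.

Lemma sum1_ext f g n :
  (forall i, (1 <= i <= n)%nat -> f i = g i) -> sum1 f n = sum1 g n.
Proof.
  induction n as [|n IH]; intros Hfg; simpl; [reflexivity|].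
  rewrite IH, Hfg; [reflexivity | lia |]. intros i Hi; apply Hfg; lia.
Qed.

Lemma sum1_le f g n :
  (forall i, (1 <= i <= n)%nat -> f i <= g i) -> sum1 f n <= sum1 g n.
Proof.
  induction n as [|n IH]; intros Hfg; simpl; [lra|].
  assert (sum1 f n <= sum1 g n) by (apply IH; intros; apply Hfg; lia).
  assert (f (S n) <= g (S n)) by (apply Hfg; lia). lra.
Qed.

Lemma sum1_plus f g n : sum1 (fun i => f i + g i) n = sum1 f n + sum1 g n.
Proof. induction n as [|n IH]; simpl; [lra|]. rewrite IH; lra. Qed.

Lemma sum1_minus f g n : sum1 (fun i => f i - g i) n = sum1 f n - sum1 g n.
Proof. induction n as [|n IH]; simpl; [lra|]. rewrite IH; lra. Qed.

Lemma sum1_scal c f n : sum1 (fun i => c * f i) n = c * sum1 f n.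
Proof. induction n as [|n IH]; simpl; [lra|]. rewrite IH; lra. Qed.

Lemma sum1_const c n : sum1 (fun _ => c) n = INR n * c.
Proof. induction n as [|n IH]; simpl sum1; [simpl; lra|]. rewrite IH, S_INR; lra. Qed.

Lemma sum1_abs f n : Rabs (sum1 f n) <= sum1 (fun i => Rabs (f i)) n.
Proof.
  induction n as [|n IH]; simpl; [rewrite Rabs_R0; lra|].
  eapply Rle_trans; [apply Rabs_triang | lra].
Qed.

Lemma sum1_shift f n : sum1 f (S n) = f 1%nat + sum1 (fun i => f (S i)) n.
Proof. induction n as [|n IH]; simpl in *; [lra|]. rewrite IH; lra. Qed.

Lemma sum1_rev f n : sum1 f n = sum1 (fun j => f (n - j + 1)%nat) n.
Proof.
  induction n as [|n IH]; [reflexivity|].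
  rewrite (sum1_shift (fun j => f (S n - j + 1)%nat) n).
  replace (S n - 1 + 1)%nat with (S n) by lia.
  simpl (sum1 f (S n)). rewrite IH. simpl. lra.
Qed.

Lemma sum1_eq0 f n : (forall i, (1 <= i <= n)%nat -> f i = 0) -> sum1 f n = 0.
Proof.
  intros Hf. rewrite (sum1_ext f (fun _ => 0)), sum1_const; [lra | exact Hf].
Qed.

Lemma sum1_single f k n :
  (1 <= k <= n)%nat -> (forall j, j <> k -> f j = 0) -> sum1 f n = f k.
Proof.
  induction n as [|n IH]; intros Hk Hf; [lia|]. simpl.
  destruct (Nat.eq_dec k (S n)) as [->|Hne].
  - rewrite sum1_eq0; [lra|]. intros i Hi; apply Hf; lia.
  - rewrite IH, (Hf (S n)); [lra | lia | lia | exact Hf].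
Qed.

Lemma sum1_mean_le f n e :
  (1 <= n)%nat -> (forall i, (1 <= i <= n)%nat -> f i <= e) -> sum1 f n / INR n <= e.
Proof.
  intros Hn Hf. assert (HN : 0 < INR n) by (apply lt_0_INR; lia).
  apply (Rmult_le_reg_r (INR n)); [exact HN|].
  unfold Rdiv; rewrite Rmult_assoc, Rinv_l, Rmult_1_r by lra.
  rewrite Rmult_comm, <- sum1_const. now apply sum1_le.
Qed.

Lemma sum1_summation_by_parts (Y c : nat -> R) n : c 0%nat = 0 ->
  sum1 (fun j => (Y j - Y (S j)) * c j) n =
  sum1 (fun j => Y j * (c j - c (pred j))) n - Y (S n) * c n.
Proof.
  intros c0; induction n as [|n IH]; simpl; [rewrite c0; lra|]. rewrite IH; lra.
Qed.

Lemma sum1_telescope_step (Y : nat -> R) k n : (1 <= k)%nat ->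
  sum1 (fun j => (Y j - Y (S j)) * (if (k <=? j)%nat then 1 else 0)) n =
  if (k <=? n)%nat then Y k - Y (S n) else 0.
Proof.
  intros Hk; induction n as [|n IH]; simpl sum1.
  - replace (k <=? 0)%nat with false by (symmetry; apply Nat.leb_gt; lia). reflexivity.
  - rewrite IH.
    destruct (Nat.leb_spec k n), (Nat.leb_spec k (S n)); try lia.
    + lra.
    + replace k with (S n) by lia. lra.
    + lra.
Qed.

Lemma maxabs_ge y n j : (1 <= j <= n)%nat -> Rabs (y j) <= maxabs y n.
Proof.
  induction n as [|n IH]; intros Hj; [lia|]. simpl.
  destruct (Nat.eq_dec j (S n)) as [->|]; [apply Rmax_r|].
  eapply Rle_trans; [apply IH; lia | apply Rmax_l].
Qed.

Lemma maxabs_ge0 y n : 0 <= maxabs y n.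
Proof.
  induction n as [|n IH]; simpl; [lra|].
  eapply Rle_trans; [apply IH | apply Rmax_l].
Qed.

Lemma sigmoid_gt0 t : 0 < sigmoid t.
Proof. unfold sigmoid. apply Rinv_0_lt_compat. pose proof (exp_pos (- t)). lra. Qed.

Lemma sigmoid_lt1 t : sigmoid t < 1.
Proof.
  unfold sigmoid. pose proof (exp_pos (- t)). rewrite <- Rinv_1.
  apply Rinv_lt_contravar; lra.
Qed.

Lemma sigmoid_le t u : t <= u -> sigmoid t <= sigmoid u.
Proof.
  intros Htu; unfold sigmoid. pose proof (exp_pos (- t)); pose proof (exp_pos (- u)).
  apply Rinv_le_contravar; [lra|].
  destruct (Rle_lt_or_eq _ _ Htu) as [Hlt | ->]; [| lra].
  assert (exp (- u) < exp (- t)) by (apply exp_increasing; lra). lra.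
Qed.

Lemma sigmoid_opp t : sigmoid (- t) = 1 - sigmoid t.
Proof.
  unfold sigmoid. rewrite Ropp_involutive.
  pose proof (exp_pos t). rewrite exp_Ropp. field. split; lra.
Qed.

Lemma delta_eq_sigmoid_opp a : delta a = sigmoid (- a).
Proof. unfold delta. now rewrite sigmoid_opp. Qed.

Lemma delta_ge0 a : 0 <= delta a.
Proof. rewrite delta_eq_sigmoid_opp. left; apply sigmoid_gt0. Qed.

Lemma delta_le_exp_opp a : delta a <= exp (- a).
Proof.
  rewrite delta_eq_sigmoid_opp. unfold sigmoid. rewrite Ropp_involutive, exp_Ropp.
  pose proof (exp_pos a). apply Rinv_le_contravar; lra.
Qed.

Lemma delta_small e : 0 < e -> exists a, 0 < a /\ delta a <= e.
Proof.
  intros He. exists (Rmax 1 (- ln e)). split.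
  - pose proof (Rmax_l 1 (- ln e)). lra.
  - eapply Rle_trans; [apply delta_le_exp_opp|].
    rewrite <- (exp_ln e) at 2 by exact He.
    pose proof (Rmax_r 1 (- ln e)).
    destruct (Rle_lt_or_eq (- Rmax 1 (- ln e)) (ln e)) as [Hlt | ->]; [lra | | lra].
    left; now apply exp_increasing.
Qed.

Section SingleSignChange.

Variables (c : nat -> R) (n k : nat) (d : R).
Hypotheses (c0 : c 0%nat = 0) (k_range : (1 <= k <= n)%nat)
  (c_before : forall j, (1 <= j < k)%nat -> 0 <= c j <= d)
  (c_from : forall j, (k <= j <= n)%nat -> - d <= c j <= 0).

Lemma sign_change_increment_le j : (1 <= j <= n)%nat ->
  Rabs (c j - c (pred j)) <= d + (if (j =? k)%nat then d else 0).
Proof.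
  intros Hj. destruct j as [|j]; [lia|]. simpl pred.
  assert (d_ge0 : 0 <= d) by (pose proof (c_from k ltac:(lia)); lra).
  assert (c_before0 : forall i, (i < k)%nat -> 0 <= c i <= d).
  { intros [|i] Hi; [rewrite c0; lra | apply c_before; lia]. }
  destruct (Nat.eqb_spec (S j) k) as [Hk | Hk].
  - pose proof (c_before0 j ltac:(lia)); pose proof (c_from (S j) ltac:(lia)).
    apply Rabs_le; lra.
  - destruct (Nat.lt_ge_cases (S j) k).
    + pose proof (c_before0 j ltac:(lia)); pose proof (c_before (S j) ltac:(lia)).
      apply Rabs_le; lra.
    + pose proof (c_from j ltac:(lia)); pose proof (c_from (S j) ltac:(lia)).
      apply Rabs_le; lra.
Qed.

Lemma sign_change_variation_le :
  sum1 (fun j => Rabs (c j - c (pred j))) n <= (INR n + 1) * d.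
Proof.
  eapply Rle_trans; [apply sum1_le; exact sign_change_increment_le|].
  rewrite sum1_plus, sum1_const, (sum1_single _ k n k_range).
  - rewrite Nat.eqb_refl. lra.
  - intros j Hj. now rewrite (proj2 (Nat.eqb_neq j k) Hj).
Qed.

Lemma abel_sum_sign_change_le (Y : nat -> R) (M : R) :
  Y (S n) = 0 -> (forall j, (1 <= j <= n)%nat -> Rabs (Y j) <= M) ->
  Rabs (sum1 (fun j => (Y j - Y (S j)) * c j) n) <= (INR n + 1) * d * M.
Proof.
  intros Y_last Y_bound.
  assert (M_ge0 : 0 <= M) by (pose proof (Y_bound 1%nat ltac:(lia)); pose proof (Rabs_pos (Y 1%nat)); lra).
  rewrite sum1_summation_by_parts, Y_last, Rmult_0_l, Rminus_0_r by exact c0.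
  eapply Rle_trans; [apply sum1_abs|].
  apply Rle_trans with (sum1 (fun j => M * Rabs (c j - c (pred j))) n).
  - apply sum1_le. intros j Hj. rewrite Rabs_mult.
    apply Rmult_le_compat_r; [apply Rabs_pos | now apply Y_bound].
  - rewrite sum1_scal. pose proof sign_change_variation_le. nra.
Qed.

End SingleSignChange.

Definition unit_at (N : nat) (x : nat -> R) (dN a : R) (j : nat) (t : R) : R :=
  sigmoid (a + 2 * a * ((t - x j) / Defs.Delta N x dN j)).

Section Network.

Variables (N : nat) (x y : nat -> R) (dN : R).
Hypotheses (x_decr : forall k : nat, (1 <= k < N)%nat -> x k > x (S k))
  (dN_pos : 0 < dN).

Lemma Delta_succ j : (j < N)%nat -> Defs.Delta N x dN j = x j - x (S j).
Proof. intros Hj. unfold Defs.Delta. now rewrite (proj2 (Nat.ltb_lt j N) Hj). Qed.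

Lemma Delta_gt0 j : (1 <= j <= N)%nat -> 0 < Defs.Delta N x dN j.
Proof.
  intros Hj. unfold Defs.Delta. destruct (Nat.ltb_spec j N); [|exact dN_pos].
  pose proof (x_decr j ltac:(lia)). lra.
Qed.

Lemma x_antitone p q : (1 <= p <= q)%nat -> (q <= N)%nat -> x q <= x p.
Proof.
  intros Hpq HqN. induction q as [|q IH]; [lia|].
  destruct (Nat.eq_dec p (S q)) as [->|]; [lra|].
  pose proof (x_decr q ltac:(lia)). pose proof (IH ltac:(lia) ltac:(lia)). lra.
Qed.

(* Unit j of the sum is the neuron with index N - j + 1, the one whose transition is at x^(j). *)
Lemma TNN_eq_unit_sum a t :
  TNN N x y dN a t =
  sum1 (fun j => (yext N y j - yext N y (S j)) * unit_at N x dN a j t) N.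
Proof.
  unfold TNN. rewrite sum1_rev. apply sum1_ext. intros j Hj.
  unfold alpha, bt, Wt, unit_at.
  replace (N - (N - j + 1) + 1)%nat with j by lia.
  replace (N - (N - j + 1) + 2)%nat with (S j) by lia.
  pose proof (Delta_gt0 j Hj). do 2 f_equal. field. lra.
Qed.

Lemma unit_at_before a j k : 0 < a -> (1 <= j < k)%nat -> (k <= N)%nat ->
  0 < unit_at N x dN a j (x k) <= delta a.
Proof.
  intros Ha Hjk HkN. split; [apply sigmoid_gt0|].
  rewrite delta_eq_sigmoid_opp. apply sigmoid_le.
  assert (HD : 0 < Defs.Delta N x dN j) by (apply Delta_gt0; lia).
  assert (x k <= x (S j)) by (apply x_antitone; lia).
  assert (Hq : (x k - x j) / Defs.Delta N x dN j <= -1).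
  { apply (Rmult_le_reg_r (Defs.Delta N x dN j)); [exact HD|].
    unfold Rdiv; rewrite Rmult_assoc, Rinv_l by lra.
    rewrite Delta_succ by lia. lra. }
  nra.
Qed.

Lemma unit_at_from a j k : 0 < a -> (1 <= k <= j)%nat -> (j <= N)%nat ->
  1 - delta a <= unit_at N x dN a j (x k) < 1.
Proof.
  intros Ha Hkj HjN. split; [|apply sigmoid_lt1].
  unfold delta. replace (1 - (1 - sigmoid a)) with (sigmoid a) by ring.
  apply sigmoid_le.
  assert (HD : 0 < Defs.Delta N x dN j) by (apply Delta_gt0; lia).
  assert (x j <= x k) by (apply x_antitone; lia).
  assert (0 <= (x k - x j) / Defs.Delta N x dN j).
  { apply Rmult_le_pos; [lra | left; now apply Rinv_0_lt_compat]. }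
  nra.
Qed.

Lemma TNN_node_error_le a k : 0 < a -> (1 <= k <= N)%nat ->
  Rabs (TNN N x y dN a (x k) - y k) <= (INR N + 1) * delta a * maxabs y N.
Proof.
  intros Ha Hk.
  set (Y := yext N y).
  set (step := fun j => if (k <=? j)%nat then 1 else 0).
  set (c := fun j => match j with O => 0 | S _ => unit_at N x dN a j (x k) - step j end).
  assert (Y_last : Y (S N) = 0).
  { unfold Y, yext. now rewrite (proj2 (Nat.leb_gt (S N) N)) by lia. }
  assert (y_step : y k = sum1 (fun j => (Y j - Y (S j)) * step j) N).
  { unfold step. rewrite sum1_telescope_step, (proj2 (Nat.leb_le k N)), Y_last by lia.
    unfold Y, yext. rewrite (proj2 (Nat.leb_le k N)) by lia. ring. }
  assert (error_sum : TNN N x y dN a (x k) - y k = sum1 (fun j => (Y j - Y (S j)) * c j) N).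
  { rewrite TNN_eq_unit_sum, y_step, <- sum1_minus.
    apply sum1_ext. intros [|j] Hj; [lia|]. unfold c, Y; cbv beta iota. ring. }
  rewrite error_sum. apply abel_sum_sign_change_le with (k := k); auto.
  - intros [|j] Hj; [lia|]. unfold c, step.
    rewrite (proj2 (Nat.leb_gt k (S j))) by lia.
    pose proof (unit_at_before a (S j) k Ha ltac:(lia) ltac:(lia)). lra.
  - intros [|j] Hj; [lia|]. unfold c, step.
    rewrite (proj2 (Nat.leb_le k (S j))) by lia.
    pose proof (unit_at_from a (S j) k Ha ltac:(lia) ltac:(lia)). lra.
  - intros j Hj. unfold Y, yext. rewrite (proj2 (Nat.leb_le j N)) by lia.
    now apply maxabs_ge.
Qed.

End Network.

Theorem theorem1 (N : nat) (x y : nat -> R) (dN : R) :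
  (1 <= N)%nat ->
  x 1%nat <= 1 ->
  (forall k : nat, (1 <= k < N)%nat -> x k > x (S k)) ->
  0 <= x N ->
  0 < dN ->
  (forall a : R, 0 < a ->
     forall k : nat, (1 <= k <= N)%nat ->
       Rabs (TNN N x y dN a (x k) - y k)
         <= (INR N + 1) * delta a * maxabs y N)
  /\
  (forall eps : R, 0 < eps ->
     exists a : R, 0 < a /\
       (forall k : nat, (1 <= k <= N)%nat ->
          Rabs (TNN N x y dN a (x k) - y k) <= eps) /\
       sum1 (fun k => Rabs (TNN N x y dN a (x k) - y k)) N / INR N <= eps).
Proof.
  intros HN _ x_decr _ dN_pos.
  pose proof (TNN_node_error_le N x y dN x_decr dN_pos) as node_bound.
  split; [exact (fun a Ha k Hk => node_bound a k Ha Hk)|].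
  intros eps Heps.
  set (M := maxabs y N). assert (M_ge0 : 0 <= M) by apply maxabs_ge0.
  set (K := (INR N + 1) * (M + 1)).
  assert (K_gt0 : 0 < K) by (unfold K; pose proof (pos_INR N); nra).
  destruct (delta_small (eps / K)) as [a [Ha Hda]]; [now apply Rdiv_lt_0_compat|].
  assert (node_le : forall k, (1 <= k <= N)%nat -> Rabs (TNN N x y dN a (x k) - y k) <= eps).
  { intros k Hk. eapply Rle_trans; [now apply node_bound|]. fold M.
    apply Rle_trans with ((INR N + 1) * (eps / K) * (M + 1)).
    - pose proof (pos_INR N); pose proof (delta_ge0 a).
      apply Rmult_le_compat; [nra | lra | | lra]. apply Rmult_le_compat_l; lra.
    - right. unfold K. field. pose proof (pos_INR N). lra. }
  exists a. split; [exact Ha|]. split; [exact node_le|].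
  now apply sum1_mean_le.
Qed.
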